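(* Let $\varepsilon>0$, let $a,b\in\mathbb{R}^d$ with $a\ne b$, and let $P_{ab}$ be a polygonal $ab$-path with $\|P_{ab}\|\le(1+\varepsilon)\|ab\|$. For $\alpha\in[0,\pi/2]$ let $E(\alpha)$ be the set of edges $e$ of $P_{ab}$ with $\angle(ab,e)<\alpha$. Then for every integer $i$ with $1\le i\le\lfloor(\pi/2)/\sqrt{\varepsilon}\rfloor$ we have $\|E(i\sqrt{\varepsilon})\|\ge(1-2/i^2)\,\|ab\|$, where $\|E(\alpha)\|$ denotes the total length of the edges in $E(\alpha)$.
   Context: For undirected segments $e_1,e_2$ with unit direction vectors $\pm\vec u_1,\pm\vec u_2$, $\angle(e_1,e_2)=\arccos|\vec u_1\cdot\vec u_2|\in[0,\pi/2]$. *)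

From HB Require Import structures.
From mathcomp Require Import all_boot all_order all_algebra.
From mathcomp Require Import all_classical all_reals all_analysis.
Set Implicit Arguments. Unset Strict Implicit. Unset Printing Implicit Defensive.
Import Order.TTheory GRing.Theory Num.Theory.
Local Open Scope ring_scope.

Definition edot {R : realType} {d : nat} (u v : 'rV[R]_d) : R :=
  \sum_(i < d) u 0 i * v 0 i.
Definition enorm {R : realType} {d : nat} (u : 'rV[R]_d) : R :=
  Num.sqrt (edot u u).

(* Angle between the undirected segments pq and rs:
   arccos |u1 . u2| for the unit directions u1, u2. *)
Definition seg_angle {R : realType} {d : nat} (p q r s : 'rV[R]_d) : R :=
  acos (`| edot ((enorm (q - p))^-1 *: (q - p)) ((enorm (s - r))^-1 *: (s - r)) |).

(* A polygonal path with k edges and vertices P 0, ..., P k;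
   edge j (j < k) is the segment P j P (j+1). *)
Definition path_length {R : realType} {d : nat} (k : nat) (P : nat -> 'rV[R]_d) : R :=
  \sum_(j < k) enorm (P j.+1 - P j).

Definition E_length {R : realType} {d : nat} (a b : 'rV[R]_d) (k : nat)
    (P : nat -> 'rV[R]_d) (alpha : R) : R :=
  \sum_(j < k | seg_angle a b (P j) (P j.+1) < alpha) enorm (P j.+1 - P j).

(** Let [u] be the unit direction of [ab].  The projections of the edges onto [u]
    telescope to [||ab||].  An edge of [E(alpha)] projects to at most its length,
    any other edge to at most [cos alpha] times its length, so
    [||ab|| <= ||E|| + cos alpha (||P|| - ||E||)].  With [||P|| <= (1+eps)||ab||]
    and [alpha^2 = i^2 eps] the claim reduces to [cos alpha (2 + alpha^2) <= 2],
    which follows from the Taylor bound [cos x < 1 - x^2/2 + x^4/24]. *)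
From HB Require Import structures.
From mathcomp Require Import all_boot all_order all_algebra.
From mathcomp Require Import all_classical all_reals all_analysis.
From mathcomp Require Import ring lra zify.
Import Order.TTheory GRing.Theory Num.Theory.
Import numFieldNormedType.Exports.
Local Open Scope ring_scope.

Section CosineBound.
Variable R : realType.

Lemma cos_lt_taylor4 (x : R) :
  x != 0 -> x ^+ 2 < 56 -> cos x < 1 - x ^+ 2 / 2 + x ^+ 4 / 24.
Proof.
move=> x0 x56.
have coefE n : cos_coeff' x n = (-1) ^+ n * x ^+ n.*2 / n.*2`!%:R.
  by rewrite /cos_coeff' -exprnP.
have /cvgN cvg_cos := @cvg_cos_coeff' R x.
rewrite -(opprK (cos _)) -(cvg_lim (@Rhausdorff R) cvg_cos) ltrNl.
have -> : - (1 - x ^+ 2 / 2 + x ^+ 4 / 24) = \sum_(0 <= n < 3) - cos_coeff' x n.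
  rewrite !big_nat_recl // big_nil !coefE /= !expr0 !expr1 !mul1r.
  rewrite (_ : 2`! = 2)%N // (_ : 4`! = 24)%N // invr1 sqrrN expr1n; ring.
rewrite -seriesN lt_sum_lim_series //; first by move/cvgP: cvg_cos; rewrite seriesN.
(* the tail pairs up as [x^(2m) / (2m)! * (1 - x^2 / ((2m+2)(2m+1)))] with [m >= 3] *)
move=> n; rewrite !coefE.
set m := (3 + n.*2)%N.
have m3 : (3 <= m)%N by rewrite /m leq_addr.
have signm : (-1) ^+ m = -1 :> R by rewrite -signr_odd /m oddD odd_double.
rewrite (_ : (3 + n.*2.+1)%N = m.+1); last by rewrite /m addnS.
clearbody m.
rewrite exprS signm doubleS !factS !natrM exprS exprS !mulN1r mulNr !opprK mul1r !mulrA.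
set y := x ^+ m.*2; set F := (m.*2)`!%:R : R.
have y0 : 0 < y by rewrite exprn_even_gt0 ?odd_double // x0 orbT.
have F0 : 0 < F by rewrite ltr0n fact_gt0.
set N := (m.*2.+2)%:R * (m.*2.+1)%:R : R.
have N56 : 56 <= N by rewrite /N -natrM ler_nat; nia.
have -> : y / F - x * x * y / (N * F) = (y / F) * (1 - x ^+ 2 / N).
  by field; rewrite !gt_eqF //; lra.
rewrite mulr_gt0 ?divr_gt0 // subr_gt0 ltr_pdivrMr; lra.
Qed.

Lemma cos_mul_lt2 (x : R) : x != 0 -> x ^+ 2 <= 10 -> cos x * (2 + x ^+ 2) < 2.
Proof.
move=> x0 x10; have A0 : 0 < x ^+ 2 by rewrite exprn_even_gt0 // x0.
have := cos_lt_taylor4 x x0 (le_lt_trans x10 (_ : 10 < 56)).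
rewrite (_ : x ^+ 4 = x ^+ 2 * x ^+ 2); last by rewrite -exprD.
move: (x ^+ 2) A0 x10 (cos x) => A A0 A10 c taylor.
(* [(1 - A/2 + A^2/24) (2 + A) = 2 + A^2 (A - 10) / 24] *)
have : A * A * (A - 10) <= 0 by rewrite mulr_ge0_le0 ?mulr_ge0 ?subr_le0 // ltW.
nra.
Qed.

Lemma le_cos_of_le_acos (c al : R) :
  -1 <= c <= 1 -> 0 <= al <= pi -> al <= acos c -> c <= cos al.
Proof.
move=> c_itv al_itv al_le.
have c_in : c \in `[-1, 1] by rewrite in_itv.
rewrite -(acosK c_in) leNgt ltr_cos -?leNgt // in_itv /=.
by rewrite acos_ge0 // acos_lepi.
Qed.

End CosineBound.

Section Euclidean.
Context {R : realType} {d : nat}.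
Implicit Types (x y u e : 'rV[R]_d).

Definition edir e : 'rV[R]_d := (enorm e)^-1 *: e.

Lemma edotC x y : edot x y = edot y x.
Proof. by apply: eq_bigr => j _; rewrite mulrC. Qed.

Lemma edotBl x y u : edot (x - y) u = edot x u - edot y u.
Proof. by rewrite /edot -sumrB; apply: eq_bigr => j _; rewrite !mxE mulrBl. Qed.

Lemma edotZl (c : R) x y : edot (c *: x) y = c * edot x y.
Proof. by rewrite /edot mulr_sumr; apply: eq_bigr => j _; rewrite !mxE mulrA. Qed.

Lemma edotZr (c : R) x y : edot x (c *: y) = c * edot x y.
Proof. by rewrite edotC edotZl edotC. Qed.

Lemma edot0l u : edot 0 u = 0.
Proof. by rewrite /edot big1 // => j _; rewrite mxE mul0r. Qed.

Lemma edot_ge0 x : 0 <= edot x x.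
Proof. by apply: sumr_ge0 => j _; rewrite -expr2 sqr_ge0. Qed.

Lemma edot_eq0 x : edot x x = 0 -> x = 0.
Proof.
move=> x0; apply/matrixP => i j; rewrite ord1 mxE.
have sq_ge0 (k : 'I_d) : true -> 0 <= x 0 k * x 0 k by rewrite -expr2 sqr_ge0.
by have /eqP := psumr_eq0P sq_ge0 x0 (i := j) isT; rewrite mulf_eq0 orbb => /eqP.
Qed.

Lemma norm_edot_le x y : `|edot x y| <= (edot x x + edot y y) / 2.
Proof.
apply: le_trans (ler_norm_sum _ _ _) _.
rewrite -big_split mulr_suml; apply: ler_sum => j _ /=.
have := sqr_ge0 (`|x 0 j| - `|y 0 j|).
have := real_normK (num_real (x 0 j)); have := real_normK (num_real (y 0 j)).
rewrite normrM; nra.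
Qed.

Lemma sqr_enorm e : enorm e ^+ 2 = edot e e.
Proof. by rewrite sqr_sqrtr // edot_ge0. Qed.

Lemma enorm_ge0 e : 0 <= enorm e.
Proof. exact: sqrtr_ge0. Qed.

Lemma enorm_eq0 e : enorm e = 0 -> e = 0.
Proof. by move=> /eqP; rewrite sqrtr_eq0 => e0; apply/edot_eq0/le_anti; rewrite e0 edot_ge0. Qed.

Lemma enormZ_edir e : enorm e *: edir e = e.
Proof.
have [/enorm_eq0 ->|e0] := eqVneq (enorm e) 0; first by rewrite /edir !scaler0.
by rewrite scalerA divff // scale1r.
Qed.

Lemma edot_edir_le1 e : edot (edir e) (edir e) <= 1.
Proof.
have [/enorm_eq0 ->|e0] := eqVneq (enorm e) 0; first by rewrite /edir scaler0 edot0l.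
by rewrite edotZl edotZr -sqr_enorm mulrA -expr2 exprVn mulVf // expf_neq0.
Qed.

Lemma norm_edot_edir_le1 x y : `|edot (edir x) (edir y)| <= 1.
Proof.
apply: le_trans (norm_edot_le _ _) _.
by rewrite ler_pdivrMr // mul1r; apply: lerD; apply: edot_edir_le1.
Qed.

Lemma edot_edir e : edot e (edir e) = enorm e.
Proof.
have [e0|e0] := eqVneq (enorm e) 0; first by rewrite e0 (enorm_eq0 _ e0) edot0l.
by rewrite edotZr -sqr_enorm expr2 mulKf.
Qed.

Lemma edot_le_enorm_mul e u : edot e u <= enorm e * `|edot u (edir e)|.
Proof.
rewrite -{1}(enormZ_edir e) edotZl edotC.
by rewrite ler_wpM2l ?enorm_ge0 ?ler_norm.
Qed.

Lemma edot_telescope (P : nat -> 'rV[R]_d) u n :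
  \sum_(j < n) edot (P j.+1 - P j) u = edot (P n - P 0%N) u.
Proof.
elim: n => [|n IH]; first by rewrite big_ord0 subrr edot0l.
by rewrite big_ord_recr /= IH !edotBl addrC addrA subrK.
Qed.

End Euclidean.

Lemma enorm_le_E_length {R : realType} {d : nat} (a b : 'rV[R]_d) (k : nat)
    (P : nat -> 'rV[R]_d) (al : R) :
  0 <= al <= pi -> P 0%N = a -> P k = b ->
  enorm (b - a) <= E_length a b k P al + cos al * (path_length k P - E_length a b k P al).
Proof.
move=> al_itv Pa Pb; set u := edir (b - a).
pose small (j : 'I_k) := seg_angle a b (P j) (P j.+1) < al.
have -> : path_length k P - E_length a b k P al =
          \sum_(j < k | ~~ small j) enorm (P j.+1 - P j).
  by rewrite /path_length (bigID small) /= addrC addrK.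
have -> : enorm (b - a) = \sum_(j < k) edot (P j.+1 - P j) u.
  by rewrite edot_telescope Pa Pb edot_edir.
rewrite (bigID small) /= mulr_sumr; apply: lerD; apply: ler_sum => j small_j.
  apply: le_trans (edot_le_enorm_mul _ _) _.
  by rewrite ler_piMr ?enorm_ge0 ?norm_edot_edir_le1.
apply: le_trans (edot_le_enorm_mul _ _) _.
rewrite [cos al * _]mulrC ler_wpM2l ?enorm_ge0 //; apply: le_cos_of_le_acos => //.
  by rewrite norm_edot_edir_le1 andbT (le_trans (lerN10 _) (normr_ge0 _)).
by rewrite leNgt.
Qed.

Lemma le_E_of_projection_bound {R : realFieldType} (eps t c L T E : R) :
  0 < eps -> 0 < t -> 0 <= c -> c * (2 + eps * t ^+ 2) <= 2 -> 0 <= L ->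
  L <= E + c * (T - E) -> T <= (1 + eps) * L -> (1 - 2 / t ^+ 2) * L <= E.
Proof.
move=> eps0 t0 c0 c_bound L0 proj T_le.
have t20 : 0 < t ^+ 2 by rewrite exprn_gt0.
have A0 : 0 < eps * t ^+ 2 by rewrite mulr_gt0.
have c1 : c < 1 by nra.
have cE : L - c * ((1 + eps) * L) <= (1 - c) * E by nra.
rewrite -(@ler_pM2l _ ((1 - c) * t ^+ 2)) ?mulr_gt0 ?subr_gt0 //.
have -> : (1 - c) * t ^+ 2 * ((1 - 2 / t ^+ 2) * L) =
          (1 - c) * t ^+ 2 * L - 2 * (1 - c) * L by field; rewrite gt_eqF.
nra.
Qed.

Theorem lemma2 (R : realType) (d : nat) (eps : R) (a b : 'rV[R]_d)
    (k : nat) (P : nat -> 'rV[R]_d) :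
  0 < eps -> a != b ->
  P 0%N = a -> P k = b ->
  path_length k P <= (1 + eps) * enorm (b - a) ->
  forall i : nat, (1 <= i)%N ->
    (i%:Z <= Num.floor ((pi / 2) / Num.sqrt eps))%R ->
    E_length a b k P (i%:R * Num.sqrt eps) >= (1 - 2 / (i%:R ^+ 2)) * enorm (b - a).
Proof.
move=> eps0 _ Pa Pb len_le i i1 i_le.
set s := Num.sqrt eps; set t : R := i%:R; set al := t * s.
have s0 : 0 < s by rewrite sqrtr_gt0.
have t0 : 0 < t by rewrite ltr0n.
have al0 : 0 < al by rewrite mulr_gt0.
have al_le : al <= pi / 2.
  by move: i_le; rewrite floor_ge_int ler_pdivlMr.
have pi2 := pihalf_lt2 R.
have cos0 : 0 <= cos al by rewrite cos_ge0_pihalf // al_le andbT; lra.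
have cos_bound : cos al * (2 + eps * t ^+ 2) <= 2.
  rewrite (_ : eps * t ^+ 2 = al ^+ 2); last by rewrite exprMn sqr_sqrtr ?ltW // mulrC.
  by rewrite ltW // cos_mul_lt2 ?gt_eqF //; nra.
apply: (@le_E_of_projection_bound _ eps t (cos al) _ (path_length k P)) => //.
  exact: enorm_ge0.
apply: enorm_le_E_length Pa Pb; rewrite (ltW al0) (le_trans al_le) //.
by rewrite ler_pdivrMr // ler_peMr ?(ltW (pi_gt0 _)) // ler1n.
Qed.
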